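(* Assume $\|\hat F'(y)-\hat F'(x)\|_F\le L_{\hat F}\|y-x\|$ for all $x,y\in\mathcal F$ and $\sigma_{\min}(\hat F'(x)^* )\ge\sqrt\mu$ for all $x\in\mathcal F$, some $\mu>0$. Then for the sequence $\{x_k\}$ generated by Scheme 2: $$\hat f_1(x_{k+1})\le\varepsilon_k+\begin{cases}\frac{L_{\hat F}}{\mu}\hat f_2(x_k)\le\frac12\hat f_1(x_k),&\text{if }\hat f_1(x_k)\le\frac{\mu}{2L_{\hat F}},\\ \hat f_1(x_k)-\frac{\mu}{4L_{\hat F}},&\text{otherwise}.\end{cases}$$ If $L_k=L_{\hat F}$ is fixed while generating the sequence, then $$\hat f_1(x_{k+1})\le\varepsilon_k+\begin{cases}\frac{L_{\hat F}}{2\mu}\hat f_2(x_k)\le\frac12\hat f_1(x_k),&\text{if }\hat f_1(x_k)\le\frac{\mu}{L_{\hat F}},\\ \hat f_1(x_k)-\frac{\mu}{2L_{\hat F}},&\text{otherwise}.\end{cases}$$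
   Context: Let $F:\mathbb R^n\to\mathbb R^m$ be smooth, $\hat F=\frac1{\sqrt m}F$ with Jacobian $\hat F'(x)$ and transpose $\hat F'(x)^*$; Euclidean norms, $\|\cdot\|_F$ Frobenius norm. $\hat f_1(x)=\|\hat F(x)\|$, $\hat f_2=\hat f_1^2$, $\phi(x,y)=\|\hat F(x)+\hat F'(x)(y-x)\|$, $\psi_{x,L,\tau}(y)=\frac\tau2+\frac{\phi(x,y)^2}{2\tau}+\frac L2\|y-x\|^2$, $T_{L,\tau}(x)=\arg\min_y\psi_{x,L,\tau}(y)$, $\mathcal T_L(x)=\arg\min_{\tau>0}\psi_{x,L,\tau}(T_{L,\tau}(x))$. $\mathcal F$ closed convex with nonempty interior, $\mathcal L(\hat f_1(x_0))\subseteq\mathcal F$ and the generated sequence stays in $\mathcal F$. Scheme 2 (input $x_0$; a rule choosing $\varepsilon_k\ge0$; $L\in(0,L_{\hat F}]$, $L_0=L$; a map $\mathcal X(x,L,\tau)$ approximating $T_{L,\tau}(x)$). For $k=0,1,\dots$: choose $\varepsilon_k$; find $\tau_k^*>0$ with $\psi_{x_k,L_k,\tau_k^*}(\mathcal X(x_k,L_k,\tau_k^* ))-\psi_{x_k,L_k,\mathcal T_{L_k}(x_k)}(T_{L_k,\mathcal T_{L_k}(x_k)}(x_k))\le\varepsilon_k$ and $\hat f_1(x_k)\ge\psi_{x_k,L_k,\tau_k^*}(\mathcal X(x_k,L_k,\tau_k^* ))$; set $x_{k+1}=\mathcal X(x_k,L_k,\tau_k^* )$; if $\hat f_1(x_{k+1})>\psi_{x_k,L_k,\tau_k^*}(x_{k+1})$,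 set $L_k:=\min\{2L_k,2L_{\hat F}\}$ and redo the search for $\tau_k^*$; otherwise $L_{k+1}=\max\{L_k/2,L\}$. *)

From HB Require Import structures.
From mathcomp Require Import all_boot all_order all_algebra.
From mathcomp Require Import all_classical all_reals all_analysis.
Set Implicit Arguments. Unset Strict Implicit. Unset Printing Implicit Defensive.
Import Order.TTheory GRing.Theory Num.Theory.
Import numFieldNormedType.Exports.
Local Open Scope classical_set_scope.
Local Open Scope ring_scope.

Section GaussNewton.
Variable R : realType.

Definition enorm (n : nat) (v : 'cV[R]_n) : R :=
  Num.sqrt (\sum_(i < n) v i 0 ^+ 2).

Definition frob (m n : nat) (A : 'M[R]_(m, n)) : R :=
  Num.sqrt (\sum_(i < m) \sum_(j < n) A i j ^+ 2).

Definition sigma_min (q p : nat) (A : 'M[R]_(q, p)) : R :=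
  inf [set enorm (A *m u) | u in [set u : 'cV[R]_p | enorm u = 1]].

Variables (n m : nat).
Variable F : 'cV[R]_n -> 'cV[R]_m.
Variable J : 'cV[R]_n -> 'M[R]_(m, n).

Definition Fhat (x : 'cV[R]_n) : 'cV[R]_m := (Num.sqrt (m%:R))^-1 *: F x.
Definition Jhat (x : 'cV[R]_n) : 'M[R]_(m, n) := (Num.sqrt (m%:R))^-1 *: J x.

Definition f1 (x : 'cV[R]_n) : R := enorm (Fhat x).
Definition f2 (x : 'cV[R]_n) : R := f1 x ^+ 2.

Definition phi (x y : 'cV[R]_n) : R := enorm (Fhat x + Jhat x *m (y - x)).

Definition psi (x : 'cV[R]_n) (L tau : R) (y : 'cV[R]_n) : R :=
  tau / 2 + phi x y ^+ 2 / (2 * tau) + L / 2 * enorm (y - x) ^+ 2.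

(* optimal value psi_{x,L,T_L(x)}(T_{L,T_L(x)}(x)) = inf over tau > 0 and y *)
Definition psi_opt (x : 'cV[R]_n) (L : R) : R :=
  inf [set r | exists tau y, 0 < tau /\ r = psi x L tau y].

Definition level_set (c : R) : set 'cV[R]_n := [set x | f1 x <= c].

Definition convex_set_E (S : set 'cV[R]_n) : Prop :=
  forall x y (t : R), S x -> S y -> 0 <= t <= 1 -> S (t *: x + (1 - t) *: y).

(* One successful search for tau^*: with weight Lc, tau^* = tau is found *)
Definition tau_search_ok (X : 'cV[R]_n -> R -> R -> 'cV[R]_n) (eps : R)
    (x : 'cV[R]_n) (Lc tau : R) : Prop :=
  0 < tau /\
  psi x Lc tau (X x Lc tau) - psi_opt x Lc <= eps /\
  psi x Lc tau (X x Lc tau) <= f1 x.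

Definition Ldouble (LF : R) (i : nat) (L0 : R) : R :=
  iter i (fun l => Num.min (2 * l) (2 * LF)) L0.

Definition Linit (L : R) (Lk : nat -> R) (k : nat) : R :=
  if k is k'.+1 then Num.max (Lk k' / 2) L else L.

(* (x, Lk, tau) is a run of Scheme 2 with inputs x0, eps, L, LF, X:
   Lk k and tau k are the accepted weight and tau^* at iteration k. *)
Definition scheme2 (x0 : 'cV[R]_n) (eps : nat -> R) (L LF : R)
    (X : 'cV[R]_n -> R -> R -> 'cV[R]_n)
    (x : nat -> 'cV[R]_n) (Lk : nat -> R) (tau : nat -> R) : Prop :=
  x 0%N = x0 /\
  forall k : nat,
    0 <= eps k /\
    (exists j : nat,
        Lk k = Ldouble LF j (Linit L Lk k) /\
        (* the j earlier attempts were all rejected *)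
        (forall i : nat, (i < j)%N ->
           exists t, tau_search_ok X (eps k) (x k) (Ldouble LF i (Linit L Lk k)) t /\
             f1 (X (x k) (Ldouble LF i (Linit L Lk k)) t) >
             psi (x k) (Ldouble LF i (Linit L Lk k)) t
                 (X (x k) (Ldouble LF i (Linit L Lk k)) t))) /\
    tau_search_ok X (eps k) (x k) (Lk k) (tau k) /\
    x k.+1 = X (x k) (Lk k) (tau k) /\
    f1 (x k.+1) <= psi (x k) (Lk k) (tau k) (x k.+1).

Definition scheme2_fixed (x0 : 'cV[R]_n) (eps : nat -> R) (LF : R)
    (X : 'cV[R]_n -> R -> R -> 'cV[R]_n)
    (x : nat -> 'cV[R]_n) (Lk : nat -> R) (tau : nat -> R) : Prop :=
  x 0%N = x0 /\
  forall k : nat,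
    0 <= eps k /\ (Lk k = LF) /\
    tau_search_ok X (eps k) (x k) (Lk k) (tau k) /\
    x k.+1 = X (x k) (Lk k) (tau k).

End GaussNewton.

From HB Require Import structures.
From mathcomp Require Import all_boot all_order all_algebra.
From mathcomp Require Import all_classical all_reals all_analysis.
From mathcomp Require Import ring lra.
Import Order.TTheory GRing.Theory Num.Theory.
Import numFieldNormedType.Exports.
Local Open Scope classical_set_scope.
Local Open Scope ring_scope.
Set Implicit Arguments. Unset Strict Implicit. Unset Printing Implicit Defensive.

(* If h solves the Gauss-Newton equation Jhat x h = - Fhat x, the bound on the
   smallest singular value gives mu |h|^2 <= f1 x ^ 2, so evaluating the
   proximal model at x + t h shows
     psi_opt x L <= (1 - t) f1 x + L / (2 mu) t^2 f1 x ^ 2   for t in [0, 1];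
   taking t = 1 or t = mu / (L f1 x) gives the two regimes.  The new iterate
   satisfies f1 x' <= eps + psi_opt x L_k: in the adaptive scheme by the
   acceptance test, with L_k <= 2 L_F; with L_k = L_F fixed because the
   Lipschitz Jacobian bounds the linearization error by L_F / 2 |x' - x|^2,
   which makes psi an upper bound of f1. *)

Section Euclidean.
Variable R : realType.

Lemma sqr_sum_mul_le k (a b : 'I_k -> R) :
  (\sum_i a i * b i) ^+ 2 <= (\sum_i a i ^+ 2) * (\sum_i b i ^+ 2).
Proof.
rewrite -subr_ge0.
pose x i j := a i ^+ 2 * b j ^+ 2 - a i * b i * (a j * b j).
have gapE : (\sum_i a i ^+ 2) * (\sum_i b i ^+ 2) - (\sum_i a i * b i) ^+ 2
            = \sum_i \sum_j x i j.
  rewrite expr2 !mulr_suml -sumrB; apply: eq_bigr => i _.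
  by rewrite !mulr_sumr -sumrB; apply: eq_bigr => j _; rewrite /x; ring.
have symE : \sum_i \sum_j (x i j + x j i) = (\sum_i \sum_j x i j) *+ 2.
  rewrite (eq_bigr (fun i => \sum_j x i j + \sum_j x j i)) => [|i _]; last first.
    by rewrite big_split.
  by rewrite big_split /= [X in _ + X]exchange_big /= mulr2n.
rewrite gapE -(pmulrn_lge0 _ (isT : 0 < 2)%N) -symE.
apply: sumr_ge0 => i _; apply: sumr_ge0 => j _.
have -> : x i j + x j i = (a i * b j - a j * b i) ^+ 2 by rewrite /x; ring.
exact: sqr_ge0.
Qed.

Lemma ler_of_sqr (a b : R) : 0 <= b -> a ^+ 2 <= b ^+ 2 -> a <= b.
Proof. by move=> b0 ab; nra. Qed.

Definition dotv k (u v : 'cV[R]_k) : R := \sum_i u i 0 * v i 0.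

Lemma enorm_ge0 k (v : 'cV[R]_k) : 0 <= enorm v.
Proof. exact: sqrtr_ge0. Qed.

Lemma enorm_sqr_sum k (v : 'cV[R]_k) : enorm v ^+ 2 = \sum_i v i 0 ^+ 2.
Proof. by rewrite sqr_sqrtr // sumr_ge0 // => i _; rewrite sqr_ge0. Qed.

Lemma enorm_sqr k (v : 'cV[R]_k) : enorm v ^+ 2 = dotv v v.
Proof. by rewrite enorm_sqr_sum; apply: eq_bigr => i _; rewrite expr2. Qed.

Lemma dotv_le k (u v : 'cV[R]_k) : dotv u v <= enorm u * enorm v.
Proof.
apply: ler_of_sqr; first by rewrite mulr_ge0 ?enorm_ge0.
by rewrite exprMn !enorm_sqr_sum; apply: sqr_sum_mul_le.
Qed.

Lemma dotvB k (r u v : 'cV[R]_k) : dotv r (u - v) = dotv r u - dotv r v.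
Proof. by rewrite /dotv -sumrB; apply: eq_bigr => i _; rewrite !mxE; ring. Qed.

Lemma dotv_linear k (r : 'cV[R]_k) : linear (dotv r).
Proof.
move=> a u v; rewrite /dotv /GRing.scale /= mulr_sumr -big_split /=.
by apply: eq_bigr => i _; rewrite !mxE; ring.
Qed.

Lemma continuous_dotv k (r : 'cV[R]_k) : continuous (dotv r).
Proof.
move=> z.
rewrite (_ : dotv r = \sum_(i < k) (fun v : 'cV[R]_k => r i 0 * v i 0)); last first.
  by rewrite fct_sumE; apply/funext.
apply: (big_ind (fun f => {for z, continuous f})) => [|f g|i _].
- exact: cst_continuous.
- exact: continuousD.
- apply: (@continuousM _ _ (cst (r i 0)) (fun v : 'cV[R]_k => v i 0)).
  + exact: cst_continuous.
  + exact: coord_continuous.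
Qed.

Lemma dotv_trmx k (u v : 'cV[R]_k) : dotv u v = (u^T *m v) 0 0.
Proof. by rewrite mxE; apply: eq_bigr => i _; rewrite mxE. Qed.

Lemma enorm_eq0 k (v : 'cV[R]_k) : enorm v = 0 -> v = 0.
Proof.
move=> v0; have : enorm v ^+ 2 = 0 by rewrite v0 expr0n.
rewrite enorm_sqr_sum => /psumr_eq0P vi0.
apply/matrixP => i j; rewrite (ord1 j) mxE.
by apply/eqP; rewrite -sqrf_eq0; apply/eqP/vi0 => // l _; rewrite sqr_ge0.
Qed.

Lemma enormZ k (c : R) (v : 'cV[R]_k) : enorm (c *: v) = `|c| * enorm v.
Proof.
rewrite /enorm -sqrtr_sqr -sqrtrM ?sqr_ge0 //; congr Num.sqrt.
by rewrite mulr_sumr; apply: eq_bigr => i _; rewrite mxE exprMn.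
Qed.

Lemma enormN k (v : 'cV[R]_k) : enorm (- v) = enorm v.
Proof. by rewrite -scaleN1r enormZ normrN normr1 mul1r. Qed.

Lemma enormD k (u v : 'cV[R]_k) : enorm (u + v) <= enorm u + enorm v.
Proof.
apply: ler_of_sqr; first by rewrite addr_ge0 ?enorm_ge0.
have -> : enorm (u + v) ^+ 2 = enorm u ^+ 2 + 2 * dotv u v + enorm v ^+ 2.
  rewrite !enorm_sqr_sum /dotv mulr_sumr -!big_split /=.
  by apply: eq_bigr => i _; rewrite mxE; ring.
by have := dotv_le u v; nra.
Qed.

Lemma enorm_mulmx_le p k (A : 'M[R]_(p, k)) (v : 'cV[R]_k) :
  enorm (A *m v) <= frob A * enorm v.
Proof.
apply: ler_of_sqr; first by rewrite mulr_ge0 ?enorm_ge0 ?sqrtr_ge0.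
rewrite exprMn !enorm_sqr_sum /frob sqr_sqrtr; last first.
  by apply: sumr_ge0 => i _; apply: sumr_ge0 => j _; rewrite sqr_ge0.
rewrite mulr_suml; apply: ler_sum => i _.
by rewrite mxE; apply: (sqr_sum_mul_le (fun j => A i j) (fun j => v j 0)).
Qed.

End Euclidean.

Section SingularValues.
Variables (R : realType) (q p : nat).

Lemma sigma_min_le_enorm (A : 'M[R]_(q, p)) (c : R) (u : 'cV[R]_p) :
  c <= sigma_min A -> c * enorm u <= enorm (A *m u).
Proof.
move=> c_le; have [->|u_neq0] := eqVneq (enorm u) 0.
  by rewrite mulr0 enorm_ge0.
have u_gt0 : 0 < enorm u by rewrite lt_def u_neq0 enorm_ge0.
have A_lbound :
    has_lbound [set enorm (A *m u) | u in [set u : 'cV[R]_p | enorm u = 1]].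
  by exists 0 => _ [v _ <-]; exact: enorm_ge0.
have : sigma_min A <= enorm (A *m ((enorm u)^-1 *: u)).
  apply: (ge_inf A_lbound); exists ((enorm u)^-1 *: u) => //=.
  by rewrite enormZ ger0_norm ?invr_ge0 ?enorm_ge0 // mulVf.
rewrite -scalemxAr enormZ ger0_norm ?invr_ge0 ?enorm_ge0 // => /(le_trans c_le).
by rewrite -ler_pdivlMr // mulrC.
Qed.

Lemma unitmx_mul_trmx (A : 'M[R]_(q, p)) (c : R) : 0 < c ->
  (forall u, c * enorm u <= enorm (A^T *m u)) -> A *m A^T \in unitmx.
Proof.
move=> c_gt0 A_bound; rewrite unitmxE unitfE.
apply/negP => /det0P [r r_neq0 rAA].
have Ar0 : enorm (A^T *m r^T) = 0.
  apply/eqP; rewrite -sqrf_eq0 enorm_sqr dotv_trmx trmx_mul !trmxK.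
  by rewrite !mulmxA -(mulmxA r) rAA mul0mx mxE.
have /enorm_eq0 : enorm r^T = 0.
  by apply/le_anti; rewrite enorm_ge0 andbT -(pmulr_rle0 _ c_gt0) -Ar0 A_bound.
by move/(congr1 trmx); rewrite trmxK trmx0 => r0; rewrite r0 eqxx in r_neq0.
Qed.

Lemma exists_preimage_enorm_le (A : 'M[R]_(q, p)) (mu : R) : 0 < mu ->
  (forall u, Num.sqrt mu * enorm u <= enorm (A^T *m u)) ->
  forall v, exists h, A *m h = v /\ mu * enorm h ^+ 2 <= enorm v ^+ 2.
Proof.
move=> mu_gt0 A_bound v.
have AA_unit : A *m A^T \in unitmx.
  by apply: (unitmx_mul_trmx _ A_bound); rewrite sqrtr_gt0.
pose w := invmx (A *m A^T) *m v.
exists (A^T *m w); split; first by rewrite mulmxA mulKVmx.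
have hw : enorm (A^T *m w) ^+ 2 = dotv w v.
  by rewrite enorm_sqr !dotv_trmx trmx_mul trmxK -!mulmxA (mulmxA A) mulKVmx.
have := dotv_le w v; rewrite -hw.
have := A_bound w; have := enorm_ge0 w; have := enorm_ge0 v.
have := sqr_sqrtr (ltW mu_gt0); have := sqrtr_ge0 mu.
set s := Num.sqrt mu; set a := enorm w; set b := enorm v; set H := enorm _.
move=> s0 <- b0 a0 saH H2ab.
have sH2 : s * H ^+ 2 <= H * b by nra.
(* b^2 - s^2 H^2 = (b - s H)^2 + 2 s (H b - s H^2) *)
have := sqr_ge0 (b - s * H); move: sH2; rewrite -subr_ge0 => /(mulr_ge0 s0); nra.
Qed.

End SingularValues.

Lemma gauss_newton_rate (R : realType) (P e f Lm mu : R) :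
  0 <= f -> 0 < Lm -> 0 < mu ->
  (forall t, 0 <= t <= 1 ->
     P <= e + ((1 - t) * f + Lm / (2 * mu) * t ^+ 2 * f ^+ 2)) ->
  (f <= mu / Lm -> P <= e + Lm / (2 * mu) * f ^+ 2 /\
                   Lm / (2 * mu) * f ^+ 2 <= f / 2) /\
  (mu / Lm < f -> P <= e + (f - mu / (2 * Lm))).
Proof.
move=> f0 Lm_gt0 mu_gt0 P_le; split=> [f_le | f_gt].
  split.
    by have := P_le 1; rewrite ler01 lexx subrr mul0r add0r expr1n mulr1; exact.
  rewrite ler_pdivlMr // in f_le.
  have -> : f / 2 = mu * f / (2 * mu) by field; rewrite gt_eqF.
  by rewrite mulrAC ler_wpM2r ?invr_ge0 ?mulr_ge0 ?(ltW mu_gt0) //; nra.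
have f_gt0 : 0 < f by apply: le_lt_trans f_gt; rewrite divr_ge0 // ltW.
have t0 : 0 <= mu / (Lm * f) by rewrite divr_ge0 ?mulr_ge0 // ltW.
have t1 : mu / (Lm * f) <= 1.
  by rewrite ler_pdivrMr ?mulr_gt0 // mul1r mulrC -ler_pdivrMr // ltW.
have := P_le (mu / (Lm * f)); rewrite t0 t1 => /(_ isT).
suff -> : (1 - mu / (Lm * f)) * f + Lm / (2 * mu) * (mu / (Lm * f)) ^+ 2 * f ^+ 2
   = f - mu / (2 * Lm) by [].
by field; rewrite !gt_eqF.
Qed.

Section ProximalModel.
Variables (R : realType) (n m : nat).
Variables (F : 'cV[R]_n -> 'cV[R]_m) (J : 'cV[R]_n -> 'M[R]_(m, n)).
Implicit Types (x y : 'cV[R]_n) (L tau mu t : R).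

Lemma psi_ge0 x L tau y : 0 <= L -> 0 < tau -> 0 <= psi F J x L tau y.
Proof.
move=> L0 tau_gt0; rewrite /psi !addr_ge0 //.
- by rewrite divr_ge0 // ltW.
- by rewrite divr_ge0 ?sqr_ge0 // mulr_ge0 // ltW.
- by rewrite mulr_ge0 ?sqr_ge0 // divr_ge0.
Qed.

Lemma psi_opt_le_psi x L tau y : 0 <= L -> 0 < tau ->
  psi_opt F J x L <= psi F J x L tau y.
Proof.
move=> L0 tau_gt0; apply: ge_inf; last by exists tau, y.
by exists 0 => _ [t [z [t_gt0 ->]]]; exact: psi_ge0.
Qed.

Lemma phi_le_psi x L tau y : 0 < tau ->
  phi F J x y + L / 2 * enorm (y - x) ^+ 2 <= psi F J x L tau y.
Proof.
move=> tau_gt0; rewrite /psi lerD2r; set p := phi F J x y.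
have -> : tau / 2 + p ^+ 2 / (2 * tau) = p + (tau - p) ^+ 2 / (2 * tau).
  by field; rewrite gt_eqF.
by rewrite lerDl divr_ge0 ?sqr_ge0 // mulr_ge0 // ltW.
Qed.

(* The infimum over tau is attained at tau = phi, or approached as tau -> 0
   when phi = 0. *)
Lemma psi_opt_le_phi x L y : 0 <= L ->
  psi_opt F J x L <= phi F J x y + L / 2 * enorm (y - x) ^+ 2.
Proof.
move=> L0; set p := phi F J x y.
have [p0|p_neq0] := eqVneq p 0.
  apply/ler_addgt0Pr => e e_gt0; apply: le_trans (psi_opt_le_psi x y L0 e_gt0) _.
  by rewrite /psi -/p p0 expr0n /= mul0r add0r addrC lerD2l; lra.
have p_gt0 : 0 < p by rewrite lt_def p_neq0 enorm_ge0.
apply: le_trans (psi_opt_le_psi x y L0 p_gt0) _.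
rewrite /psi -/p lerD2r.
have -> : p ^+ 2 / (2 * p) = p / 2 by field; rewrite gt_eqF.
lra.
Qed.

(* Trial point x + t h, where h solves Jhat x h = - Fhat x. *)
Lemma psi_opt_le_damped_step x L mu t : 0 < mu ->
  Num.sqrt mu <= sigma_min (Jhat J x)^T -> 0 <= L -> 0 <= t <= 1 ->
  psi_opt F J x L <= (1 - t) * f1 F x + L / (2 * mu) * t ^+ 2 * f1 F x ^+ 2.
Proof.
move=> mu_gt0 sigma_ge L0 /andP[t0 t1].
have [h [Jh h_le]] := exists_preimage_enorm_le mu_gt0
  (fun u => sigma_min_le_enorm u sigma_ge) (- Fhat F x).
rewrite enormN -/(f1 F x) in h_le.
apply: le_trans (psi_opt_le_phi x (x + t *: h) L0) _.
rewrite /phi addrAC subrr add0r -scalemxAr Jh scalerN.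
rewrite -{1}[Fhat F x]scale1r -scalerBl (enormZ (1 - t)) (enormZ t).
rewrite (ger0_norm t0) ger0_norm ?subr_ge0 // -/(f1 F x) lerD2l.
rewrite -ler_pdivlMl // in h_le.
have -> : L / (2 * mu) * t ^+ 2 * f1 F x ^+ 2 =
          L / 2 * (t ^+ 2 * (f1 F x ^+ 2 / mu)).
  by field; rewrite gt_eqF.
by rewrite exprMn ler_wpM2l ?divr_ge0 // ler_wpM2l ?sqr_ge0 // mulrC.
Qed.

Lemma f1_next_le x x' (e Lc Lm mu : R) :
  0 < mu -> Num.sqrt mu <= sigma_min (Jhat J x)^T -> 0 < Lc -> Lc <= Lm ->
  f1 F x' <= e + psi_opt F J x Lc ->
  (f1 F x <= mu / Lm -> f1 F x' <= e + Lm / (2 * mu) * f1 F x ^+ 2 /\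
                        Lm / (2 * mu) * f1 F x ^+ 2 <= f1 F x / 2) /\
  (mu / Lm < f1 F x -> f1 F x' <= e + (f1 F x - mu / (2 * Lm))).
Proof.
move=> mu_gt0 sigma_ge Lc_gt0 Lc_le next_le.
apply: gauss_newton_rate => //; [exact: enorm_ge0 | exact: lt_le_trans Lc_le |].
move=> t t01; apply: (le_trans next_le); rewrite lerD2l.
apply: le_trans (psi_opt_le_damped_step mu_gt0 sigma_ge (ltW Lc_gt0) t01) _.
by rewrite lerD2l !ler_wpM2r ?sqr_ge0 // invr_ge0 mulr_ge0 // ltW.
Qed.

End ProximalModel.

Lemma taylor1_le (R : realType) (g dg : R -> R) (c K : R) :
  (forall s, is_derive s (1 : R) g (dg s)) ->
  (forall s, 0 < s < 1 -> dg s <= c + K * s) ->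
  g 1 - g 0 <= c + K / 2.
Proof.
move=> gd dg_le.
pose k s := g s - (c * s + K / 2 * s ^+ 2).
have kd s : is_derive s (1 : R) k (dg s - (c + K * s)).
  by apply: is_derive_eq; rewrite /GRing.scale /=; field.
have k_dec : {in `[0, 1] &, {homo k : s t /~ s <= t}}.
  apply: ler0_derive1_le_cc => [s _ | s | ].
  - exact: ex_derive.
  - by rewrite in_itv /= derive1E derive_val subr_le0 => /dg_le.
  - by apply: derivable_within_continuous => s _; exact: ex_derive.
have := k_dec 1 0; rewrite !in_itv /= !lexx ler01 => /(_ isT isT isT).
rewrite /k expr0n expr1n /=; lra.
Qed.

Section Linearization.
Variables (R : realType) (n m : nat).
Variables (F : 'cV[R]_n -> 'cV[R]_m) (J : 'cV[R]_n -> 'M[R]_(m, n)).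
Hypothesis F_diff : forall z, differentiable F z /\
  ('d F z : 'cV[R]_n -> 'cV[R]_m) = (fun h => J z *m h).

Lemma Fhat_diff z : differentiable (Fhat F) z /\
  ('d (Fhat F) z : 'cV[R]_n -> 'cV[R]_m) = (fun h => Jhat J z *m h).
Proof.
pose c : R := (Num.sqrt (m%:R : R))^-1.
have -> : Fhat F = c *: F by apply/funext.
have [dF dFE] := F_diff z; split; first exact: differentiableZ.
by rewrite diffZ // dFE; apply/funext => h /=; rewrite /Jhat scalemxAl.
Qed.

Lemma dotv_Fhat_diff (r : 'cV[R]_m) z :
  differentiable (dotv r \o Fhat F) z /\
  ('d (dotv r \o Fhat F) z : 'cV[R]_n -> R) = (fun h => dotv r (Jhat J z *m h)).
Proof.
pose rL : {linear 'cV[R]_m -> R} :=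
  HB.pack (dotv r) (GRing.isLinear.Build _ _ _ _ (dotv r) (dotv_linear r)).
have [dF dFE] := Fhat_diff z.
have drL : differentiable rL (Fhat F z).
  by apply: linear_differentiable; exact: continuous_dotv.
split; first exact: (differentiable_comp dF drL).
by rewrite (diff_comp dF drL) dFE diff_lin //; exact: continuous_dotv.
Qed.

Lemma is_derive_dotv_Fhat (r : 'cV[R]_m) y h t :
  is_derive t (1 : R) (fun s => dotv r (Fhat F (y + s *: h)))
    (dotv r (Jhat J (y + t *: h) *m h)).
Proof.
set G := dotv r \o Fhat F; set g := fun s : R => G (y + s *: h).
have [dG dGE] := dotv_Fhat_diff r (y + t *: h).
have quotE : (fun s : R => s^-1 *: ((g \o shift t) (s *: 1) - g t)) =
    (fun s : R => s^-1 *: ((G \o shift (y + t *: h)) (s *: h) - G (y + t *: h))).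
  apply/funext => s; rewrite /g /= scalerDl.
  by rewrite [s *: 1]/GRing.scale /= mulr1 addrCA.
apply: DeriveDef; first by rewrite /derivable quotE; exact: diff_derivable.
by rewrite /derive quotE -/(derive G (y + t *: h) h) deriveE // dGE.
Qed.

Variables (Fset : set 'cV[R]_n) (LF : R).
Hypothesis Fset_convex : convex_set_E Fset.
Hypothesis Jhat_lipschitz : forall y z, Fset y -> Fset z ->
  frob (Jhat J y - Jhat J z) <= LF * enorm (y - z).

Lemma Fhat_linearization_le y z : 0 <= LF -> Fset y -> Fset z ->
  enorm (Fhat F z - Fhat F y - Jhat J y *m (z - y)) <=
  LF / 2 * enorm (z - y) ^+ 2.
Proof.
(* taylor1_le for s |-> <r, Fhat (y + s h)>, r the residual, gives
   |r|^2 <= LF / 2 |h|^2 |r|. *)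
move=> LF0 Fy Fz; set h := z - y; set r := _ - Jhat J y *m h.
set K := LF * enorm h ^+ 2 * enorm r.
have dg_le s : 0 < s < 1 ->
    dotv r (Jhat J (y + s *: h) *m h) <= dotv r (Jhat J y *m h) + K * s.
  case/andP=> s_gt0 s_lt1; rewrite -lerBlDl -dotvB -mulmxBl.
  have Fys : Fset (y + s *: h).
    have -> : y + s *: h = s *: z + (1 - s) *: y.
      by apply/matrixP => i j; rewrite !mxE; ring.
    by apply: Fset_convex => //; rewrite (ltW s_gt0) (ltW s_lt1).
  have dJ_le := Jhat_lipschitz Fys Fy.
  rewrite addrAC subrr add0r enormZ ger0_norm ?(ltW s_gt0) // in dJ_le.
  have -> : K * s = enorm r * (LF * (s * enorm h) * enorm h) by rewrite /K; ring.
  apply: le_trans (dotv_le _ _) (ler_wpM2l (enorm_ge0 r) _).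
  exact: le_trans (enorm_mulmx_le _ _) (ler_wpM2r (enorm_ge0 h) dJ_le).
have := taylor1_le (is_derive_dotv_Fhat r y h) dg_le.
rewrite scale1r scale0r addr0 /h (addrC y) subrK -/h => g_le.
have r_sqr_le : enorm r ^+ 2 <= K / 2 by rewrite enorm_sqr {2}/r !dotvB; lra.
have : 0 <= LF / 2 * enorm h ^+ 2 by rewrite mulr_ge0 ?divr_ge0 ?sqr_ge0.
have := enorm_ge0 r; rewrite /K in r_sqr_le; nra.
Qed.

Lemma f1_le_psi y z tau : 0 <= LF -> 0 < tau -> Fset y -> Fset z ->
  f1 F z <= psi F J y LF tau z.
Proof.
move=> LF0 tau_gt0 Fy Fz; apply: le_trans (phi_le_psi F J y LF z tau_gt0).
rewrite /f1 /phi.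
set a := Fhat F y + Jhat J y *m (z - y).
rewrite -(subrK a (Fhat F z)) addrC; apply: le_trans (enormD _ _) _.
by rewrite lerD2l /a opprD addrA Fhat_linearization_le.
Qed.

End Linearization.

Lemma Ldouble_gt0 (R : realType) (LF l : R) j :
  0 < LF -> 0 < l -> 0 < Ldouble LF j l.
Proof. by move=> LF_gt0 l_gt0; elim: j => //= j IH; rewrite lt_min !mulr_gt0. Qed.

Lemma Ldouble_le_max (R : realType) (LF l : R) j :
  Ldouble LF j l <= Num.max l (2 * LF).
Proof.
case: j => [|j] /=; first by rewrite le_max lexx.
by rewrite le_max; apply/orP; right; rewrite ge_min; apply/orP; right.
Qed.

Lemma scheme2_Lk_bound (R : realType) n m (F : 'cV[R]_n -> 'cV[R]_m)
    (J : 'cV[R]_n -> 'M[R]_(m, n)) x0 eps (L LF : R) X x Lk tau :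
  0 < L -> L <= LF -> scheme2 F J x0 eps L LF X x Lk tau ->
  forall k, 0 < Lk k <= 2 * LF.
Proof.
move=> L_gt0 L_le [_ run].
have Lk_of_Linit k : 0 < Linit L Lk k <= 2 * LF -> 0 < Lk k <= 2 * LF.
  case/andP=> l_gt0 l_le; have [_ [[j [-> _]] _]] := run k.
  rewrite Ldouble_gt0 //=; last exact: lt_le_trans L_le.
  by rewrite (le_trans (Ldouble_le_max _ _ _)) // ge_max l_le lexx.
elim=> [|k /andP[Lk_gt0 Lk_le]]; apply: Lk_of_Linit => /=.
  by rewrite L_gt0 /=; lra.
by rewrite lt_max L_gt0 orbT /= ge_max; apply/andP; split; lra.
Qed.

Theorem theorem9 (R : realType) (n m : nat)
    (F : 'cV[R]_n -> 'cV[R]_m) (J : 'cV[R]_n -> 'M[R]_(m, n))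
    (Fset : set 'cV[R]_n) (LF mu L : R) (x0 : 'cV[R]_n) (eps : nat -> R)
    (X : 'cV[R]_n -> R -> R -> 'cV[R]_n)
    (x : nat -> 'cV[R]_n) (Lk : nat -> R) (tau : nat -> R) :
  (0 < m)%N ->
  (* F is differentiable with Jacobian J *)
  (forall z, differentiable F z /\ ('d F z : 'cV[R]_n -> 'cV[R]_m) = (fun h => J z *m h)) ->
  (* the set \mathcal F: closed, convex, nonempty interior *)
  closed Fset -> convex_set_E Fset -> (Fset°) !=set0 ->
  level_set F (f1 F x0) `<=` Fset ->
  (* Lipschitz Jacobian and sigma_min bound on \mathcal F *)
  (forall y z, Fset y -> Fset z -> frob (Jhat J y - Jhat J z) <= LF * enorm (y - z)) ->
  0 < mu ->
  (forall z, Fset z -> Num.sqrt mu <= sigma_min (Jhat J z)^T) ->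
  0 < L -> L <= LF ->
  (forall k, Fset (x k)) ->
  (scheme2 F J x0 eps L LF X x Lk tau ->
   forall k : nat,
     (f1 F (x k) <= mu / (2 * LF) ->
        f1 F (x k.+1) <= eps k + LF / mu * f2 F (x k) /\
        LF / mu * f2 F (x k) <= f1 F (x k) / 2) /\
     (mu / (2 * LF) < f1 F (x k) ->
        f1 F (x k.+1) <= eps k + (f1 F (x k) - mu / (4 * LF)))) /\
  (scheme2_fixed F J x0 eps LF X x Lk tau ->
   forall k : nat,
     (f1 F (x k) <= mu / LF ->
        f1 F (x k.+1) <= eps k + LF / (2 * mu) * f2 F (x k) /\
        LF / (2 * mu) * f2 F (x k) <= f1 F (x k) / 2) /\
     (mu / LF < f1 F (x k) ->
        f1 F (x k.+1) <= eps k + (f1 F (x k) - mu / (2 * LF)))).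
Proof.
move=> _ F_diff _ Fset_convex _ _ J_lip mu_gt0 sigma_ge L_gt0 L_le xF.
have LF_gt0 : 0 < LF := lt_le_trans L_gt0 L_le.
split=> [run k | [_ run] k].
  have [_ [_ [[_ [opt_le _]] [xk1 accepted]]]] := run.2 k.
  rewrite -xk1 in opt_le.
  have /andP[Lk_gt0 Lk_le] := scheme2_Lk_bound L_gt0 L_le run k.
  have next_le : f1 F (x k.+1) <= eps k + psi_opt F J (x k) (Lk k) by lra.
  have -> : LF / mu = 2 * LF / (2 * mu) by field; rewrite gt_eqF.
  have -> : 4 * LF = 2 * (2 * LF) by ring.
  exact: f1_next_le (sigma_ge _ (xF k)) Lk_gt0 Lk_le next_le.
have [_ [Lk_eq [[tau_gt0 [opt_le _]] xk1]]] := run k.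
rewrite Lk_eq in xk1 opt_le; rewrite -xk1 in opt_le.
have accepted := f1_le_psi F_diff Fset_convex J_lip (ltW LF_gt0) tau_gt0 (xF k) (xF k.+1).
have next_le : f1 F (x k.+1) <= eps k + psi_opt F J (x k) LF by lra.
exact: f1_next_le (sigma_ge _ (xF k)) LF_gt0 (lexx LF) next_le.
Qed.
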